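(* Let $K$ be an infinite commutative domain, let $n\ge0$, and let $W_n$ be the $K$-submodule of the free associative algebra $K\langle x,y\rangle$ with basis the monomials $y^ixy^j$, $i+j=n$. Let $\alpha\in W_n$. (i) $\Delta\alpha=0$ if and only if $\alpha$ is a $K$-scalar multiple of $e_n$. (ii) If $\operatorname{char}K=0$ then $\partial\alpha/\partial y=0$ if and only if $\alpha$ is a $K$-scalar multiple of $e_n$.
   Context: Let $V$ be the $K$-submodule of $K\langle x,y\rangle$ spanned by all monomials $y^ixy^j$, $i,j\ge0$. The difference operator $\Delta$ on $V$ is $\Delta\alpha(x,y)=\alpha(x,y+1)-\alpha(x,y)$ (computed in the unital free algebra). $\partial/\partial y$ denotes the unique $K$-derivation of $K\langle x,y\rangle$ sending $y\mapsto1$ and $x\mapsto0$. $e_0=x$, $e_{j+1}=e_jy-ye_j$, so $e_n=\sum_{i=0}^n(-1)^i\binom ni y^ixy^{n-i}$. *)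

(* A concrete model of the free associative algebra K<x,y>:
   an element is a formal finite K-linear combination of words over {x,y}
   (a list of (coefficient, word) pairs); two such combinations denote the
   same element iff all their word-coefficients agree ([feq]). *)
From HB Require Import structures.
From mathcomp Require Import all_boot all_order all_algebra.
Set Implicit Arguments. Unset Strict Implicit. Unset Printing Implicit Defensive.
Import Order.TTheory GRing.Theory Num.Theory.
Local Open Scope ring_scope.

(* letters: true = x, false = y *)
Definition word := seq bool.

Section FreeAlg.
Variable K : comNzRingType.

Definition fsum := seq (K * word).

Definition coef (f : fsum) (w : word) : K :=
  \sum_(p <- f) (if p.2 == w then p.1 else 0).

Definition feq (f g : fsum) : Prop := forall w, coef f w = coef g w.

Definition fadd (f g : fsum) : fsum := f ++ g.
Definition fscale (c : K) (f : fsum) : fsum := [seq (c * p.1, p.2) | p <- f].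
Definition fmul (f g : fsum) : fsum :=
  [seq (p.1 * q.1, p.2 ++ q.2) | p <- f, q <- g].
Definition fone : fsum := [:: (1, [::])].
Definition fx : fsum := [:: (1, [:: true])].
Definition fy : fsum := [:: (1, [:: false])].

Definition linext (h : word -> fsum) (f : fsum) : fsum :=
  flatten [seq fscale p.1 (h p.2) | p <- f].

Fixpoint shift_word (w : word) : fsum :=
  match w with
  | [::] => fone
  | b :: w' => fmul (if b then fx else fadd fy fone) (shift_word w')
  end.

Definition shiftY (f : fsum) : fsum := linext shift_word f.

Definition Delta (f : fsum) : fsum := fadd (shiftY f) (fscale (-1) f).

Fixpoint dy_word (w : word) : fsum :=
  match w with
  | [::] => [::]
  | b :: w' => fadd (if b then [::] else [:: (1, w')])
                    (fmul [:: (1, [:: b])] (dy_word w'))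
  end.

Definition dy (f : fsum) : fsum := linext dy_word f.

Definition mono (i j : nat) : word := nseq i false ++ true :: nseq j false.

Definition in_W (n : nat) (f : fsum) : Prop :=
  exists a : 'I_n.+1 -> K,
    feq f [seq (a i, mono i (n - i)) | i <- enum 'I_n.+1].

Fixpoint e (n : nat) : fsum :=
  match n with
  | 0 => fx
  | n'.+1 => fadd (fmul (e n') fy) (fscale (-1) (fmul fy (e n')))
  end.

Definition is_zero (f : fsum) : Prop := forall w, coef f w = 0.

End FreeAlg.

(* Every alpha in W_n is determined by its coefficients A_i at y^i x y^(n-i).
   In the monomial basis, Delta alpha = 0 reads
   sum_i A_i C(i,p) C(n-i,r) = [p + r = n] A_p for all p, r, and
   d alpha/dy = 0 reads (p+1) A_(p+1) + (n-p) A_p = 0.  The coefficients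
   (-1)^i C(n,i) of e_n solve both systems (by an alternating binomial sum,
   resp. (p+1) C(n,p+1) = (n-p) C(n,p)), and each system is lower triangular
   in A (for Delta take p = 0) with diagonal 1, resp. k, which is regular in
   characteristic 0; hence every solution is A_0 times the one of e_n.
   No polynomial is ever evaluated. *)

From HB Require Import structures.
From mathcomp Require Import all_boot all_order all_algebra ring zify.
Set Implicit Arguments. Unset Strict Implicit. Unset Printing Implicit Defensive.
Import Order.TTheory GRing.Theory Num.Theory.
Local Open Scope ring_scope.

Section Coefficients.
Variable K : comNzRingType.
Implicit Types (f g : fsum K) (w v : word) (c : K).

Lemma coef_nil w : coef (K:=K) [::] w = 0.
Proof. by rewrite /coef big_nil. Qed.

Lemma coef_cons p f w : coef (p :: f) w = (if p.2 == w then p.1 else 0) + coef f w.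
Proof. by rewrite /coef big_cons. Qed.

Lemma coef_fadd f g w : coef (fadd f g) w = coef f w + coef g w.
Proof. by rewrite /coef big_cat. Qed.

Lemma coef_fscale c f w : coef (fscale c f) w = c * coef f w.
Proof.
elim: f => [|p f IH]; first by rewrite !coef_nil mulr0.
by rewrite /= !coef_cons IH mulrDr; case: (p.2 == w); rewrite ?mulr0.
Qed.

Lemma coef_linext h f w : coef (linext h f) w = \sum_(p <- f) p.1 * coef (h p.2) w.
Proof.
elim: f => [|p f IH]; first by rewrite coef_nil big_nil.
by rewrite /linext /= coef_fadd -/(linext h f) IH coef_fscale big_cons.
Qed.

Lemma big_fsum_coef (G : word -> K) f s :
  uniq s -> {subset [seq p.2 | p <- f] <= s} ->
  \sum_(p <- f) p.1 * G p.2 = \sum_(u <- s) coef f u * G u.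
Proof.
move=> s_uniq; elim: f => [|p f IH] f_s.
  by rewrite big_nil big1 // => u _; rewrite coef_nil mul0r.
have p_s : p.2 \in s by apply: f_s; rewrite inE eqxx.
rewrite big_cons IH => [|u u_f]; last by apply: f_s; rewrite inE u_f orbT.
under [RHS]eq_bigr => u _ do rewrite coef_cons mulrDl.
rewrite big_split /=; congr (_ + _).
rewrite (bigD1_seq p.2) //= eqxx big1 ?addr0 // => u.
by rewrite eq_sym => /negbTE ->; rewrite mul0r.
Qed.

Lemma linext_feq h f g : feq f g -> feq (linext h f) (linext h g).
Proof.
move=> fg w; rewrite !coef_linext.
pose s := undup [seq p.2 | p <- f ++ g].
have s_uniq : uniq s := undup_uniq _.
rewrite !(big_fsum_coef (fun u => coef (h u) w) s_uniq) => [|u|u];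
  rewrite ?mem_undup ?map_cat ?mem_cat.
- by apply: eq_bigr => u _; rewrite fg.
- by move=> ->; rewrite orbT.
- by move=> ->.
Qed.

Lemma coef_fmulDl f1 f2 g w :
  coef (fmul (fadd f1 f2) g) w = coef (fmul f1 g) w + coef (fmul f2 g) w.
Proof. by rewrite /fmul allpairs_cat coef_fadd. Qed.

Lemma coef_letter_fmul c b g w :
  coef (fmul [:: (c, [:: b])] g) w =
  if w is b' :: w' then (if b' == b then c * coef g w' else 0) else 0.
Proof.
rewrite /fmul /= cats0; elim: g w => [|q g IH] w.
  by case: w => [|b' w]; rewrite ?coef_nil ?mulr0 ?if_same.
rewrite /= !coef_cons IH; case: w => [|b' w] /=; first by rewrite add0r.
rewrite eqseq_cons eq_sym; case: (b' == b) => /=; last by rewrite add0r.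
by rewrite coef_cons mulrDr; case: (q.2 == w); rewrite ?mulr0.
Qed.

Lemma coef_fone_fmul g w : coef (fmul (fone K) g) w = coef g w.
Proof.
rewrite /fmul /= cats0; elim: g => [|q g IH]; first by rewrite !coef_nil.
by rewrite /= !coef_cons IH mul1r.
Qed.

Lemma coef_fmul_fy_nil f : coef (fmul f (fy K)) [::] = 0.
Proof.
elim: f => [|p f IH]; first by rewrite coef_nil.
rewrite -[p :: f]/(fadd [:: p] f) coef_fmulDl IH /fmul /= coef_cons coef_nil.
by rewrite !addr0; case: p.2.
Qed.

Lemma coef_fmul_fy_rcons f w b :
  coef (fmul f (fy K)) (rcons w b) = if b then 0 else coef f w.
Proof.
elim: f => [|p f IH]; first by rewrite !coef_nil if_same.
rewrite -[p :: f]/(fadd [:: p] f) coef_fmulDl IH /fmul /= !coef_cons coef_nil addr0 /= mulr1.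
by rewrite cats1 eqseq_rcons; case: b {IH}; rewrite ?andbF ?andbT ?add0r.
Qed.

End Coefficients.

Fixpoint unmono (w : word) : option (nat * nat) :=
  match w with
  | [::] => None
  | true :: w' => if has id w' then None else Some (0%N, size w')
  | false :: w' => omap (fun pr => (pr.1.+1, pr.2)) (unmono w')
  end.

Lemma nseq_false w : ~~ has id w -> w = nseq (size w) false.
Proof. by elim: w => //= -[] w IH //= /IH {1}->. Qed.

Lemma unmonoK p r : unmono (mono p r) = Some (p, r).
Proof. by elim: p => [|p /= ->] //=; rewrite has_nseq andbF size_nseq. Qed.

Lemma unmono_some w p r : unmono w = Some (p, r) -> w = mono p r.
Proof.
elim: w p r => [|[] w IH] p r //=.
  by case: ifP => // /negbT/nseq_false w_y [<- <-]; rewrite /mono /= -w_y.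
by case E: (unmono w) => [[p' r']|] //= [<- <-]; rewrite (IH _ _ E).
Qed.

Lemma eq_mono p r w : (mono p r == w) = (unmono w == Some (p, r)).
Proof. by apply/eqP/eqP => [<-|/unmono_some ->]; rewrite ?unmonoK. Qed.

Lemma monoS p r : mono p.+1 r = false :: mono p r.
Proof. by []. Qed.

Lemma mono_rcons p r : mono p r.+1 = rcons (mono p r) false.
Proof. by rewrite /mono rcons_cat /= -cats1 -[[:: false]]/(nseq 1 false) -nseqD addn1. Qed.

Lemma unmono_rcons w :
  unmono (rcons w false) = omap (fun pr => (pr.1, pr.2.+1)) (unmono w).
Proof.
elim: w => [|[] w IH] //=; first by rewrite has_rcons /= size_rcons; case: has.
by rewrite IH; case: unmono.
Qed.

Lemma unmono_rcons_x w p r : unmono (rcons w true) = Some (p, r) -> r = 0%N.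
Proof.
move/unmono_some; case: r => // r; rewrite mono_rcons.
by move/(congr1 (last true)); rewrite !last_rcons.
Qed.

Section MonomialCoefficients.
Variable K : comNzRingType.
Implicit Types (F G : nat -> nat -> K) (w : word).

Definition mcoef F w : K := if unmono w is Some (p, r) then F p r else 0.

Lemma mcoef_mono F p r : mcoef F (mono p r) = F p r.
Proof. by rewrite /mcoef unmonoK. Qed.

Lemma mcoefB F G w : mcoef F w - mcoef G w = mcoef (fun p r => F p r - G p r) w.
Proof. by rewrite /mcoef; case: unmono => [[]|]; rewrite ?subr0. Qed.

Lemma mcoefZ c F w : c * mcoef F w = mcoef (fun p r => c * F p r) w.
Proof. by rewrite /mcoef; case: unmono => [[]|]; rewrite ?mulr0. Qed.

Lemma eq_mcoef F G : (forall p r, F p r = G p r) -> mcoef F =1 mcoef G.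
Proof. by move=> FG w; rewrite /mcoef; case: unmono => [[]|]. Qed.

End MonomialCoefficients.

Section WordImages.
Variable K : comNzRingType.
Implicit Types (f : fsum K) (F : nat -> nat -> K) (v w : word).

Lemma coef_shift_word_x w v : coef (shift_word K (true :: w)) v =
  if v is b :: v' then (if b then coef (shift_word K w) v' else 0) else 0.
Proof. by rewrite /= coef_letter_fmul; case: v => // -[] v' //=; rewrite mul1r. Qed.

Lemma coef_shift_word_y w v : coef (shift_word K (false :: w)) v =
  (if v is b :: v' then (if b then 0 else coef (shift_word K w) v') else 0)
  + coef (shift_word K w) v.
Proof.
rewrite -[shift_word K _]/(fmul (fadd (fy K) (fone K)) (shift_word K w)).
rewrite coef_fmulDl coef_letter_fmul coef_fone_fmul.
by case: v => // -[] v' //=; rewrite mul1r.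
Qed.

Lemma coef_dy_word_x w v : coef (dy_word K (true :: w)) v =
  if v is b :: v' then (if b then coef (dy_word K w) v' else 0) else 0.
Proof. by rewrite /= coef_letter_fmul; case: v => // -[] v' //=; rewrite mul1r. Qed.

Lemma coef_dy_word_y w v : coef (dy_word K (false :: w)) v =
  (if w == v then 1 else 0)
  + if v is b :: v' then (if b then 0 else coef (dy_word K w) v') else 0.
Proof.
rewrite -[dy_word K _]/(fadd [:: (1, w)] (fmul [:: (1, [:: false])] (dy_word K w))).
rewrite coef_fadd coef_letter_fmul coef_cons coef_nil addr0.
by case: v => // -[] v' //=; rewrite mul1r.
Qed.

Lemma coef_shift_nseq j v : coef (shift_word K (nseq j false)) v =
  if has id v then 0 else 'C(j, size v)%:R.
Proof.
elim: j v => [|j IH] v.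
  rewrite /= coef_cons coef_nil addr0.
  by case: v => [|[] v] //=; case: has; rewrite ?bin0n.
rewrite -[nseq _ _]/(false :: nseq j false) coef_shift_word_y.
case: v => [|[] v] /=; rewrite ?IH /= ?add0r ?bin0 //.
by case: has; rewrite ?addr0 // binS natrD addrC.
Qed.

Lemma coef_shift_mono i j :
  coef (shift_word K (mono i j)) =1 mcoef (fun p r => ('C(i, p) * 'C(j, r))%N%:R).
Proof.
rewrite /mcoef; elim: i => [|i IH] v.
  rewrite -[mono 0 j]/(true :: nseq j false) coef_shift_word_x.
  case: v => [|[] v] //=; first by rewrite coef_shift_nseq; case: has; rewrite // bin0 mul1n.
  by case: unmono => [[p r]|] //=; rewrite bin0n mul0n.
rewrite monoS coef_shift_word_y.
case: v => [|[] v]; rewrite ?IH /= ?add0r //; first by case: has; rewrite //= !bin0.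
by case: unmono => [[p r]|] /=; rewrite ?addr0 // binS mulnDl natrD addrC.
Qed.

Lemma eq_nseq_false j v : (nseq j false == v) = ~~ has id v && (size v == j).
Proof.
apply/eqP/andP => [<-|[/nseq_false {2}-> /eqP -> //]].
by rewrite has_nseq size_nseq andbF.
Qed.

Lemma coef_dy_nseq j v : coef (dy_word K (nseq j false)) v =
  if has id v then 0 else if (size v).+1 == j then j%:R else 0.
Proof.
elim: j v => [|j IH] v; first by rewrite /= coef_nil; case: has.
rewrite -[nseq _ _]/(false :: nseq j false) coef_dy_word_y eq_nseq_false.
case: v => [|[] v] /=; rewrite ?addr0 ?IH ?eqSS //; first by case: j {IH}.
by case: has; rewrite /= ?addr0 // eq_sym; case: eqP; rewrite ?addr0 // -natr1 addrC.
Qed.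

Lemma coef_dy_mono i j : coef (dy_word K (mono i j)) =1 mcoef (fun p r =>
  (if (p.+1 == i) && (r == j) then i%:R else 0)
  + (if (p == i) && (r.+1 == j) then j%:R else 0)).
Proof.
rewrite /mcoef; elim: i => [|i IH] v.
  rewrite -[mono 0 j]/(true :: nseq j false) coef_dy_word_x.
  case: v => [|[] v] //=; first by rewrite coef_dy_nseq; case: has; rewrite //= add0r.
  by case: unmono => [[p r]|] //=; rewrite addr0.
rewrite monoS coef_dy_word_y eq_mono.
case: v => [|[] v] /=; first by rewrite addr0.
  rewrite addr0; case: has => //=.
  by case: i {IH} => [|i] /=; rewrite ?addr0 //; case: (size v == j).
rewrite IH; case: unmono => [[p r]|] //=; rewrite ?addr0 //.
rewrite (inj_eq Some_inj) xpair_eqE !eqSS.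
have [->|i_p] := eqVneq i p.+1; last by rewrite /= !add0r.
by rewrite /= (ltn_eqF (ltnSn p)) /= !addr0; case: (r == j); rewrite ?addr0.
Qed.

Lemma coef_fmul_fy f F : coef f =1 mcoef F ->
  coef (fmul f (fy K)) =1 mcoef (fun p r => if r is r'.+1 then F p r' else 0).
Proof.
move=> fF; case/lastP => [|v []]; first exact: coef_fmul_fy_nil.
  rewrite coef_fmul_fy_rcons /mcoef.
  by case E: unmono => [[p r]|] //; rewrite (unmono_rcons_x E).
by rewrite coef_fmul_fy_rcons fF /mcoef unmono_rcons; case: unmono => [[]|].
Qed.

Lemma coef_fy_fmul f F : coef f =1 mcoef F ->
  coef (fmul (fy K) f) =1 mcoef (fun p r => if p is p'.+1 then F p' r else 0).
Proof.
move=> fF [|[] v]; rewrite coef_letter_fmul //= ?mul1r.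
  by rewrite /mcoef /=; case: has.
by rewrite fF /mcoef /=; case: unmono => [[]|].
Qed.

Definition ecoef (n p : nat) : K := (-1) ^+ p * 'C(n, p)%:R.

Lemma ecoefS n p r :
  (if r is r'.+1 then (if (p + r' == n)%N then ecoef n p else 0) else 0)
  - (if p is p'.+1 then (if (p' + r == n)%N then ecoef n p' else 0) else 0)
  = if (p + r == n.+1)%N then ecoef n.+1 p else 0.
Proof.
case: p => [|p]; case: r => [|r]; rewrite ?add0n ?addn0 ?addSn ?addnS ?eqSS ?subr0 //;
  case: eqP => [<-|]; rewrite ?subrr ?oppr0 ?sub0r // /ecoef.
- by rewrite !bin0.
- by rewrite !binn exprS mulN1r !mulr1.
- by rewrite [in RHS]binS natrD exprS; ring.
Qed.

Lemma coef_e n :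
  coef (e K n) =1 mcoef (fun p r => if (p + r == n)%N then ecoef n p else 0).
Proof.
elim: n => [|n IH] w.
  rewrite /= coef_cons coef_nil addr0 -[[:: true]]/(mono 0 0) eq_mono /mcoef.
  case: unmono => [[[|p] [|r]]|] //=.
  by rewrite /ecoef mul1r bin0.
rewrite coef_fadd coef_fscale mulN1r (coef_fmul_fy IH) (coef_fy_fmul IH) mcoefB.
exact/eq_mcoef/ecoefS.
Qed.

End WordImages.

Section HomogeneousComponent.
Variable K : comNzRingType.
Implicit Types (A : nat -> K) (f : fsum K) (F G : nat -> nat -> K).

Lemma mcoef_sum (I : Type) (s : seq I) (c : I -> K) (F : I -> nat -> nat -> K) w :
  \sum_(i <- s) c i * mcoef (F i) w = mcoef (fun p r => \sum_(i <- s) c i * F i p r) w.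
Proof. by rewrite /mcoef; case: unmono => [[]|] //; rewrite big1 // => i _; rewrite mulr0. Qed.

Lemma is_zero_mcoef f F : coef f =1 mcoef F -> is_zero f <-> forall p r, F p r = 0.
Proof.
move=> fF; split=> [f0 p r | F0 w]; first by rewrite -(mcoef_mono F p r) -fF f0.
by rewrite fF /mcoef; case: unmono => [[]|].
Qed.

Lemma feq_mcoef f g F G : coef f =1 mcoef F -> coef g =1 mcoef G ->
  feq f g <-> forall p r, F p r = G p r.
Proof.
move=> fF gG; split=> [fg p r | FG w]; first by rewrite -!(mcoef_mono _ p r) -fF -gG fg.
by rewrite fF gG; apply: eq_mcoef.
Qed.

Definition wcomb n A : fsum K := [seq (A i, mono i (n - i)) | i <- iota 0 n.+1].

Lemma in_W_wcomb n f : in_W n f -> exists A, feq f (wcomb n A).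
Proof.
case=> a fa; exists (fun k => a (inord k)); rewrite /wcomb -val_enum_ord -map_comp.
by under [map _ (enum _)]eq_map => i do rewrite /= inord_val.
Qed.

Lemma coef_linext_wcomb h n A w :
  coef (linext h (wcomb n A)) w = \sum_(0 <= i < n.+1) A i * coef (h (mono i (n - i))) w.
Proof. by rewrite coef_linext big_map. Qed.

Lemma coef_wcomb n A :
  coef (wcomb n A) =1 mcoef (fun p r => if (p + r == n)%N then A p else 0).
Proof.
move=> w; rewrite /coef big_map /mcoef -/(index_iota 0 n.+1).
under eq_bigr do rewrite /= eq_mono.
case: unmono => [[p r]|]; last by rewrite big1.
under eq_bigr => i _ do rewrite (inj_eq Some_inj) xpair_eqE eq_sym if_and.
by rewrite -big_mkcond big_nat1_eq -if_and; congr (if _ then _ else _); lia.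
Qed.

Lemma coef_shiftY_wcomb n A : coef (shiftY (wcomb n A)) =1
  mcoef (fun p r => \sum_(0 <= i < n.+1) A i * ('C(i, p) * 'C(n - i, r))%N%:R).
Proof.
move=> w; rewrite coef_linext_wcomb -mcoef_sum.
by apply: eq_bigr => i _; rewrite coef_shift_mono.
Qed.

Lemma coef_dy_wcomb n A : coef (dy (wcomb n A)) =1 mcoef (fun p r =>
  if (p.+1 + r == n)%N then A p.+1 * p.+1%:R + A p * (n - p)%:R else 0).
Proof.
move=> w; rewrite coef_linext_wcomb.
under eq_bigr do rewrite coef_dy_mono.
rewrite mcoef_sum; apply: eq_mcoef => p r.
under eq_bigr => i _ do
  rewrite mulrDr eq_sym [p == i]eq_sym !if_and !(fun_if (GRing.mul (A i))) !mulr0.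
rewrite big_split /= -!big_mkcond !big_nat1_eq -!if_and.
have -> : ((p.+1 < n.+1) && (r == n - p.+1) = (p.+1 + r == n))%N by lia.
have -> : ((p < n.+1) && (r.+1 == n - p) = (p.+1 + r == n))%N by lia.
by case: ifP; rewrite ?addr0.
Qed.

Definition shift_fixed n A : Prop := forall p r,
  \sum_(0 <= i < n.+1) A i * ('C(i, p) * 'C(n - i, r))%N%:R
  = if (p + r == n)%N then A p else 0.

Definition dy_recurrence n A : Prop :=
  forall p, (p < n)%N -> A p.+1 * p.+1%:R + A p * (n - p)%:R = 0.

Lemma Delta_eq0_wcomb n A f : feq f (wcomb n A) -> is_zero (Delta f) <-> shift_fixed n A.
Proof.
move=> fA; apply: iff_trans (is_zero_mcoef _) _.
  move=> w; rewrite coef_fadd coef_fscale mulN1r (linext_feq _ fA) fA.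
  by rewrite coef_shiftY_wcomb coef_wcomb mcoefB.
by split=> fixA p r; apply/eqP; move/eqP: (fixA p r); rewrite subr_eq0.
Qed.

Lemma dy_eq0_wcomb n A f : feq f (wcomb n A) -> is_zero (dy f) <-> dy_recurrence n A.
Proof.
move=> fA; apply: iff_trans (is_zero_mcoef _) _ => [w|].
  by rewrite (linext_feq _ fA) coef_dy_wcomb.
split=> [dyA p p_n | dyA p r]; last by case: eqP => // pr_n; apply: dyA; lia.
by move: (dyA p (n - p.+1)%N); rewrite subnKC // eqxx.
Qed.

Lemma feq_scale_e_wcomb n A f c : feq f (wcomb n A) ->
  feq f (fscale c (e K n)) <-> forall k, (k <= n)%N -> A k = c * ecoef K n k.
Proof.
move=> fA; apply: iff_trans (feq_mcoef _ _) _ => [w|w|].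
- by rewrite fA coef_wcomb.
- by rewrite coef_fscale coef_e mcoefZ.
split=> [Ae k k_n | Ae p r].
  by move: (Ae k (n - k)%N); rewrite subnKC // eqxx.
by case: eqP => [pr_n|_]; rewrite ?mulr0 // Ae -?pr_n ?leq_addr.
Qed.

End HomogeneousComponent.

Lemma bin_trinomial n i p r : (p <= i <= n)%N -> (p + r <= n)%N ->
  ('C(n, i) * 'C(i, p) * 'C(n - i, r) = 'C(n, p) * 'C(n - p, r) * 'C(n - p - r, i - p))%N.
Proof.
move=> /andP[p_i i_n] pr_n.
have [i_r|r_i] := ltnP (n - i) r.
  by rewrite (bin_small i_r) (@bin_small (n - p - r) (i - p)) ?muln0 //; lia.
have fact_gt0 : (0 < p`! * (i - p)`! * r`! * (n - i - r)`!)%N.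
  by rewrite !muln_gt0 !fact_gt0.
apply/eqP; rewrite -(eqn_pmul2r fact_gt0); apply/eqP; transitivity n`!.
  by rewrite -(bin_fact i_n) -(bin_fact p_i) -(bin_fact r_i); ring.
have ip_npr : (i - p <= n - p - r)%N by lia.
rewrite -(bin_fact (leq_trans p_i i_n)) -(bin_fact (_ : r <= n - p)%N); last lia.
rewrite -(bin_fact ip_npr) (_ : n - p - r - (i - p) = n - i - r)%N; [ring | lia].
Qed.

Section Kernels.
Variable K : comNzRingType.
Implicit Types (A E : nat -> K) (n : nat).

Lemma alternating_sum_bin N m : (N <= m)%N ->
  \sum_(0 <= q < m.+1) (-1) ^+ q * 'C(N, q)%:R = (N == 0)%:R :> K.
Proof.
move=> N_m; rewrite (big_cat_nat (leq0n N.+1) (_ : N < m.+1)%N) //=.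
rewrite [X in _ + X]big1_seq ?addr0.
  have -> : (N == 0)%:R = (1 - 1 : K) ^+ N by rewrite subrr expr0n.
  rewrite big_mkord exprBn.
  by apply: eq_bigr => i _; rewrite !expr1n !mulr1 mulr_natr.
by move=> q /andP[_]; rewrite mem_index_iota => /andP[N_q _]; rewrite bin_small // mulr0.
Qed.

Lemma shift_fixed_ecoef n : shift_fixed n (ecoef K n).
Proof.
move=> p r; rewrite /ecoef.
have [pr_n|n_pr] := leqP (p + r) n; last first.
  rewrite ifF; last lia.
  rewrite big1_seq // => i; rewrite mem_index_iota => /andP[_ i_n].
  have [i_p|p_i] := ltnP i p; first by rewrite (bin_small i_p) mul0n mulr0.
  by rewrite (@bin_small (n - i) r) ?muln0 ?mulr0 //; lia.
rewrite (big_cat_nat (leq0n p) (_ : p <= n.+1)%N) /=; last lia.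
rewrite big1_seq ?add0r => [|i]; last first.
  by rewrite mem_index_iota => /andP[_ i_p]; rewrite (bin_small i_p) mul0n mulr0.
rewrite -{1}(add0n p) big_addn subSn; last lia.
rewrite (eq_big_nat _ _ (F2 := fun j => (-1) ^+ p * ('C(n, p) * 'C(n - p, r))%:R
   * ((-1) ^+ j * 'C(n - p - r, j)%:R))) => [|j /andP[_ j_n]]; last first.
  rewrite -[LHS]mulrA -natrM mulnA bin_trinomial //; last lia.
  by rewrite addnK exprD !natrM; ring.
rewrite -mulr_sumr alternating_sum_bin; last lia.
case: eqP => [npr0|npr].
  have -> : (n - p = r)%N by lia.
  by rewrite binn muln1 mulr1 (_ : (p + r == n) = true)%N //; lia.
by rewrite mulr0n mulr0 (_ : (p + r == n) = false)%N //; lia.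
Qed.

Lemma triangular_unique n (u : nat -> K) (m : nat -> nat -> K) A E :
  E 0%N = 1 -> (forall k, (0 < k <= n)%N -> GRing.lreg (u k)) ->
  (forall k, (0 < k <= n)%N -> u k * A k = \sum_(0 <= i < k) A i * m k i) ->
  (forall k, (0 < k <= n)%N -> u k * E k = \sum_(0 <= i < k) E i * m k i) ->
  forall k, (k <= n)%N -> A k = A 0%N * E k.
Proof.
move=> E0 u_reg recA recE; elim/ltn_ind => -[_ _|k IH k_n]; first by rewrite E0 mulr1.
apply: (u_reg k.+1 k_n); rewrite recA // mulrCA recE // mulr_sumr.
by apply: eq_big_nat => i /andP[_ i_k]; rewrite IH ?mulrA //; lia.
Qed.

Lemma shift_fixed_triangular n A : shift_fixed n A ->
  forall k, (0 < k <= n)%N -> 1 * A k = \sum_(0 <= i < k) A i * - 'C(n - i, n - k)%:R.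
Proof.
move=> fixA k /andP[k_gt0 k_n]; move: (fixA 0%N (n - k)%N).
rewrite add0n ifF; last lia.
rewrite (big_cat_nat (leq0n k.+1) (_ : k < n.+1)%N) //= [X in _ + X]big1_seq ?addr0.
  rewrite big_nat_recr //= bin0 binn muln1 mulr1 mul1r => /eqP.
  rewrite addrC addr_eq0 => /eqP ->; rewrite -sumrN.
  by apply: eq_bigr => i _; rewrite bin0 mul1n mulrN.
move=> i /andP[_]; rewrite mem_index_iota => /andP[k_i i_n].
by rewrite (@bin_small (n - i) (n - k)) ?muln0 ?mulr0 //; lia.
Qed.

Lemma shift_fixedP n A :
  shift_fixed n A <-> exists c, forall k, (k <= n)%N -> A k = c * ecoef K n k.
Proof.
split=> [fixA | [c Ac] p r].
  exists (A 0%N); apply: (triangular_unique (u := fun=> 1)) => //.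
  - by rewrite /ecoef expr0 mul1r bin0.
  - by move=> k _; apply: lreg1.
  - exact: shift_fixed_triangular.
  - exact/shift_fixed_triangular/shift_fixed_ecoef.
rewrite (eq_big_nat _ _ (F2 := fun i => c * (ecoef K n i * ('C(i, p) * 'C(n - i, r))%:R)))
  => [|i /andP[_ i_n]]; last by rewrite Ac ?mulrA.
rewrite -mulr_sumr shift_fixed_ecoef.
by case: eqP => [pr_n|_]; rewrite ?mulr0 // Ac // -pr_n leq_addr.
Qed.

Lemma ecoef_dy_recurrence n : dy_recurrence n (ecoef K n).
Proof.
move=> p _; have binE : 'C(n, p.+1)%:R * p.+1%:R = (n - p)%:R * 'C(n, p)%:R :> K.
  by rewrite -!natrM mulnC mul_bin_left.
rewrite /ecoef exprS.
transitivity ((-1) ^+ p * ((n - p)%:R * 'C(n, p)%:R - 'C(n, p.+1)%:R * p.+1%:R) : K).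
  by ring.
by rewrite binE subrr mulr0.
Qed.

Lemma dy_recurrence_triangular n A : dy_recurrence n A -> forall k, (0 < k <= n)%N ->
  k%:R * A k = \sum_(0 <= i < k) A i * (if i.+1 == k then - (n - i)%:R else 0).
Proof.
move=> recA [|p] // /andP[_ p_n].
rewrite big_nat_recr //= eqxx big1_seq ?add0r => [|i /andP[_]]; last first.
  by rewrite mem_index_iota => /andP[_ i_p]; rewrite ifF ?mulr0 //; lia.
by rewrite mulrN mulrC; apply/eqP; rewrite -addr_eq0 recA.
Qed.

End Kernels.

Lemma dy_recurrenceP (K : idomainType) (char0 : [pchar K] =i pred0) n (A : nat -> K) :
  dy_recurrence n A <-> exists c, forall k, (k <= n)%N -> A k = c * ecoef K n k.
Proof.
split=> [recA | [c Ac] p p_n].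
  exists (A 0%N); apply: (triangular_unique (u := fun k => k%:R)).
  - by rewrite /ecoef expr0 mul1r bin0.
  - by move=> k /andP[k_gt0 _]; apply/mulfI; rewrite (pcharf0P _).1 // -lt0n.
  - exact: dy_recurrence_triangular.
  - exact/dy_recurrence_triangular/ecoef_dy_recurrence.
rewrite !Ac ?(ltnW p_n) // -(mulr0 c) -(ecoef_dy_recurrence K p_n); ring.
Qed.

Unset Implicit Arguments.

Theorem proposition2p4 (K : idomainType)
  (Kinf : forall s : seq K, exists k : K, k \notin s)
  (n : nat) (alpha : fsum K) (Halpha : in_W n alpha) :
  (is_zero (Delta alpha) <-> exists c : K, feq alpha (fscale c (e K n)))
  /\
  ([pchar K] =i pred0 ->
     (is_zero (dy alpha) <-> exists c : K, feq alpha (fscale c (e K n)))).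
Proof.
have [A alphaA] := in_W_wcomb Halpha.
have multiple_e : (exists c, feq alpha (fscale c (e K n))) <->
    exists c, forall k, (k <= n)%N -> A k = c * ecoef K n k.
  by split=> -[c]; exists c; apply/(feq_scale_e_wcomb c alphaA).
split=> [|char0].
  apply: iff_trans (Delta_eq0_wcomb alphaA) _.
  exact: iff_trans (shift_fixedP n A) (iff_sym multiple_e).
apply: iff_trans (dy_eq0_wcomb alphaA) _.
exact: iff_trans (dy_recurrenceP char0 n A) (iff_sym multiple_e).
Qed.
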